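(* Let $p$ be a prime, $C$ a countable $p$-group, and $A$ a countable abelian group with $p$-primary subgroup $A_p$. Then $\mathrm{PExt}(C,A)$ and $\mathrm{PExt}(C,A_p)$ are Borel-definably isomorphic.
   Context: For countable $C,A$: $\mathsf Z(C,A)$ is the Polish group (closed in $A^{C\times C}$) of normalized symmetric 2-cocycles ($c(x,0)=0$, $c(x,y)=c(y,x)$, $c(y,z)-c(x+y,z)+c(x,y+z)-c(x,y)=0$), $\mathsf B(C,A)$ the subgroup of coboundaries $c(x,y)=\phi(y)-\phi(x+y)+\phi(x)$, $\mathsf B_{\mathrm w}(C,A)$ the subgroup of cocycles whose restriction to $S\times S$ is a coboundary for every finite $S\le C$; $\mathrm{PExt}(C,A)=\mathsf B_{\mathrm w}(C,A)/\mathsf B(C,A)$, a group with a Polish cover. A homomorphism between groups with a Polish cover $\hat G/N\to\hat H/M$ is Borel-definable if it is induced by a Borel function $\hat G\to\hat H$; a Borel-definable isomorphism is a bijective Borel-definable homomorphism. *)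

From HB Require Import structures.
From mathcomp Require Import all_boot all_order all_algebra.
From mathcomp Require Import all_classical all_reals all_analysis.

Set Implicit Arguments.
Unset Strict Implicit.
Unset Printing Implicit Defensive.

Import Order.TTheory GRing.Theory Num.Theory.
Local Open Scope classical_set_scope.
Local Open Scope ring_scope.

Definition cochain_space (C A : countZmodType) : topologicalType :=
  {ptws (C * C)%type -> discrete_topology A}.

Definition Borel (T : topologicalType) : set (set T) := <<s open >>.

Definition borel_on (T U : topologicalType) (D : set T) (f : T -> U) : Prop :=
  forall B : set U, Borel B ->
    exists2 B' : set T, Borel B' & D `&` (f @^-1` B) = D `&` B'.

Definition pprimary (p : nat) (A : zmodType) : set A :=
  [set a | exists n : nat, a *+ (p ^ n) = 0].

Definition is_pgroup (p : nat) (C : zmodType) : Prop :=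
  forall x : C, exists n : nat, x *+ (p ^ n) = 0.

(* Throughout, G : set A is a subgroup of A used as coefficient group:
   cochains with coefficients in G are the c : C*C -> A with values in G.
   For G = setT this is literally the paper's definition with coefficients in
   A; for G = pprimary p A it is the one with coefficients in A_p. *)

Definition Zcoc (C A : countZmodType) (G : set A) : set (C * C -> A) :=
  [set c | (forall x y, G (c (x, y))) /\
           (forall x, c (x, 0) = 0) /\
           (forall x y, c (x, y) = c (y, x)) /\
           (forall x y z,
              c (y, z) - c (x + y, z) + c (x, y + z) - c (x, y) = 0)].

Definition Bcob (C A : countZmodType) (G : set A) : set (C * C -> A) :=
  [set c | Zcoc G c /\
           exists2 phi : C -> A, (forall x, G (phi x)) &
             forall x y, c (x, y) = phi y - phi (x + y) + phi x].

Definition finite_subgroup (C : zmodType) (S : set C) : Prop :=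
  finite_set S /\ S 0 /\ (forall x y, S x -> S y -> S (x - y)).

Definition Bwcob (C A : countZmodType) (G : set A) : set (C * C -> A) :=
  [set c | Zcoc G c /\
           forall S : set C, finite_subgroup S ->
             exists2 phi : C -> A, (forall x, G (phi x)) &
               forall x y, S x -> S y ->
                 c (x, y) = phi y - phi (x + y) + phi x].

Definition cdiff (C A : countZmodType) (c d : C * C -> A) : C * C -> A :=
  fun xy => c xy - d xy.
Definition cadd (C A : countZmodType) (c d : C * C -> A) : C * C -> A :=
  fun xy => c xy + d xy.

(* PExt(C,G1) = Bw(C,G1)/B(C,G1) and PExt(C,G2) = Bw(C,G2)/B(C,G2) are
   Borel-definably isomorphic: there is a Borel function f on Bw(C,G1) with
   values in Bw(C,G2) inducing a well-defined bijective group homomorphism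
   between the quotients. *)
Definition PExt_borel_isomorphic (C A : countZmodType) (G1 G2 : set A) : Prop :=
  exists f : (C * C -> A) -> (C * C -> A),
    @borel_on (cochain_space C A) (cochain_space C A) (Bwcob G1) f /\
        (forall c, Bwcob G1 c -> Bwcob G2 (f c)) /\
        (forall c d, Bwcob G1 c -> Bwcob G1 d ->
           Bcob G1 (cdiff c d) -> Bcob G2 (cdiff (f c) (f d))) /\
        (forall c d, Bwcob G1 c -> Bwcob G1 d ->
           Bcob G2 (cdiff (f (cadd c d)) (cadd (f c) (f d)))) /\
        (forall c d, Bwcob G1 c -> Bwcob G1 d ->
           Bcob G2 (cdiff (f c) (f d)) -> Bcob G1 (cdiff c d)) /\
        (forall e, Bwcob G2 e -> exists2 c, Bwcob G1 c & Bcob G2 (cdiff e (f c))).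

(* For x in the p-group C let N_x = p^k be a power of p killing x.  If c lies in
   B_w(C,A), then on the finite subgroup generated by x it is the coboundary of
   some psi, and the orbit sum  sum_(k < N_x) c(x, kx)  telescopes to N_x psi(x).
   Choose phi_c(x) with N_x phi_c(x) congruent to this orbit sum modulo A_p.
   Since a *+ p^k lies in A_p only if a does, psi - phi_c takes values in A_p on
   every finite subgroup where c = cob psi, so c - cob phi_c lies in B_w(C,A_p).
   The same congruences show that c |-> c - cob phi_c is additive modulo B(C,A_p),
   preserves and reflects coboundaries, and is the identity modulo coboundaries
   on B_w(C,A_p).  Each coordinate of c - cob phi_c depends on finitely many
   coordinates of c, so the map is continuous, hence Borel. *)

From HB Require Import structures.
From mathcomp Require Import all_boot all_order all_algebra.
From mathcomp Require Import all_classical all_reals all_analysis.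

Set Implicit Arguments.
Unset Strict Implicit.
Unset Printing Implicit Defensive.

Import Order.TTheory GRing.Theory Num.Theory.
Local Open Scope classical_set_scope.
Local Open Scope ring_scope.

Section ZmodInterchange.
Variable V : zmodType.
Implicit Types a b c d : V.

Lemma addBrACA a b c d : (a - b) + (c - d) = (a + c) - (b + d).
Proof. by rewrite addrACA opprD. Qed.

Lemma subBrACA a b c d : (a - b) - (c - d) = (a - c) - (b - d).
Proof. by rewrite !opprD !opprK addrACA. Qed.

Lemma subBrACA4 a b c d a' b' c' d' :
  (a - a') - (b - b') + (c - c') - (d - d') = (a - b + c - d) - (a' - b' + c' - d').
Proof. by rewrite (subBrACA a a') (addBrACA (a - b)) (subBrACA (a - b + c)). Qed.

Lemma addBrACA4 a b c d a' b' c' d' :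
  (a + a') - (b + b') + (c + c') - (d + d') = (a - b + c - d) + (a' - b' + c' - d').
Proof.
by rewrite -(addBrACA a b a' b') (addrACA (a - b)) -(addBrACA (a - b + c)).
Qed.

End ZmodInterchange.

Section Coboundary.
Variables C A : zmodType.
Implicit Types psi chi : C -> A.

Definition cob psi : C * C -> A := fun xy => psi xy.2 - psi (xy.1 + xy.2) + psi xy.1.

Definition cocycle_defect (c : C * C -> A) (x y z : C) : A :=
  c (y, z) - c (x + y, z) + c (x, y + z) - c (x, y).

Lemma cobD psi chi : cob (psi + chi) = cob psi + cob chi.
Proof.
by apply/funext => -[x y]; rewrite /cob !fctE /= -!addBrACA addrACA.
Qed.

Lemma cobB psi chi : cob (psi - chi) = cob psi - cob chi.
Proof.
by apply/funext => -[x y]; rewrite /cob !fctE /= subBrACA addBrACA.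
Qed.

Lemma cocycle_defectB (c d : C * C -> A) x y z :
  cocycle_defect (c - d) x y z = cocycle_defect c x y z - cocycle_defect d x y z.
Proof. by rewrite /cocycle_defect !fctE /= subBrACA4. Qed.

Lemma cocycle_defectD (c d : C * C -> A) x y z :
  cocycle_defect (c + d) x y z = cocycle_defect c x y z + cocycle_defect d x y z.
Proof. by rewrite /cocycle_defect !fctE /= addBrACA4. Qed.

Lemma cob_cocycle psi x y z : cocycle_defect (cob psi) x y z = 0.
Proof.
rewrite /cocycle_defect /cob /= addrA !opprD !opprK !addrA.
(* the twelve terms cancel in pairs *)
by rewrite (ACl ((1*4)*(2*7)*(3*10)*(5*8)*(6*11)*(9*12))%AC) /= !subrr !addNr !addr0.
Qed.

Lemma sum_cob_orbit psi x n :
  \sum_(k < n) cob psi (x, x *+ k) = psi x *+ n - (psi (x *+ n) - psi 0).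
Proof.
have step k : cob psi (x, x *+ k) = psi x - (psi (x *+ k.+1) - psi (x *+ k)).
  by rewrite /cob /= -mulrS opprB addrC.
rewrite (eq_bigr (fun k : 'I_n => psi x - (psi (x *+ k.+1) - psi (x *+ k)))) => [|k _].
  rewrite sumrB sumr_const card_ord.
  rewrite -(big_mkord xpredT (fun k => psi (x *+ k.+1) - psi (x *+ k))).
  by rewrite telescope_sumr // mulr0n.
exact: step.
Qed.

End Coboundary.

Section AdditiveSubgroup.
Variables (V : zmodType) (G : set V).

Definition additive_subgroup : Prop :=
  G 0 /\ forall a b, G a -> G b -> G (a - b).

Hypothesis hG : additive_subgroup.

Lemma subgroup0 : G 0. Proof. by case: hG. Qed.

Lemma subgroupB a b : G a -> G b -> G (a - b). Proof. by case: hG => _; apply. Qed.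

Lemma subgroupN a : G a -> G (- a).
Proof. by move=> Ga; rewrite -sub0r; apply: subgroupB => //; exact: subgroup0. Qed.

Lemma subgroupD a b : G a -> G b -> G (a + b).
Proof. by move=> Ga Gb; rewrite -[b]opprK; apply: subgroupB => //; exact: subgroupN. Qed.

Lemma subgroupMn a n : G a -> G (a *+ n).
Proof.
move=> Ga; elim: n => [|n IHn]; first by rewrite mulr0n; exact: subgroup0.
by rewrite mulrS; apply: subgroupD.
Qed.

Lemma subgroup_sum n (f : 'I_n -> V) : (forall i, G (f i)) -> G (\sum_(i < n) f i).
Proof. by move=> Gf; apply: big_ind => //; [exact: subgroup0 | exact: subgroupD]. Qed.

End AdditiveSubgroup.

Lemma additive_subgroupT (V : zmodType) : additive_subgroup [set: V].
Proof. by []. Qed.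

Lemma finite_subgroup_additive (V : zmodType) (S : set V) :
  finite_subgroup S -> additive_subgroup S.
Proof. by case. Qed.

Section PPrimary.
Variables (p : nat) (V : zmodType).

Lemma pprimary_subgroup : additive_subgroup (@pprimary p V).
Proof.
have killed (c : V) k l : c *+ p ^ k = 0 -> c *+ p ^ (k + l) = 0.
  by move=> ck; rewrite expnD mulrnA ck mul0rn.
split=> [|a b [n an] [m bm]]; first by exists 0%N; rewrite mul0rn.
by exists (n + m)%N; rewrite mulrnBl killed // addnC killed // subrr.
Qed.

Lemma pprimary_mulrnX (a : V) n : pprimary p (a *+ p ^ n) -> pprimary p a.
Proof. by case=> m am; exists (n + m)%N; rewrite expnD mulrnA. Qed.

End PPrimary.

Section Cocycles.
Variables (C A : countZmodType) (G : set A).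
Hypothesis hG : additive_subgroup G.
Implicit Types (c d : C * C -> A) (psi : C -> A).

Definition cob_on (S : set C) c psi : Prop :=
  forall x y, S x -> S y -> c (x, y) = cob psi (x, y).

Lemma Zcoc00 c : Zcoc G c -> c (0, 0) = 0.
Proof. by case=> _ []. Qed.

Lemma Zcoc_restrict (G' : set A) c : Zcoc G c -> (forall u, G' (c u)) -> Zcoc G' c.
Proof. by move=> [_ cZ] G'c; split=> // x y; exact: G'c. Qed.

Lemma Zcoc_sub c d : Zcoc G c -> Zcoc G d -> Zcoc G (c - d).
Proof.
move=> [Gc [c0 [cC cZ]]] [Gd [d0 [dC dZ]]]; split; first by move=> x y; exact: subgroupB.
split; first by move=> x; rewrite !fctE c0 d0 subrr.
split; first by move=> x y; rewrite !fctE cC dC.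
move=> x y z; rewrite -[LHS]/(cocycle_defect (c - d) x y z) cocycle_defectB.
by rewrite /cocycle_defect cZ dZ subrr.
Qed.

Lemma Zcoc_add c d : Zcoc G c -> Zcoc G d -> Zcoc G (c + d).
Proof.
move=> [Gc [c0 [cC cZ]]] [Gd [d0 [dC dZ]]]; split; first by move=> x y; exact: subgroupD.
split; first by move=> x; rewrite !fctE c0 d0 addr0.
split; first by move=> x y; rewrite !fctE cC dC.
move=> x y z; rewrite -[LHS]/(cocycle_defect (c + d) x y z) cocycle_defectD.
by rewrite /cocycle_defect cZ dZ addr0.
Qed.

Lemma Zcoc_cob psi : (forall x, G (psi x)) -> psi 0 = 0 -> Zcoc G (cob psi).
Proof.
move=> Gpsi psi0; split; first by move=> x y; apply: subgroupD => //; exact: subgroupB.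
split; first by move=> x; rewrite /cob /= addr0 psi0 sub0r addNr.
split; first by move=> x y; rewrite /cob /= (addrC y x) addrAC [RHS]addrAC (addrC (psi y)).
exact: cob_cocycle.
Qed.

Lemma Bcob_cob psi : (forall x, G (psi x)) -> psi 0 = 0 -> Bcob G (cob psi).
Proof. by move=> Gpsi psi0; split; [exact: Zcoc_cob | exists psi]. Qed.

Lemma Bcob_cobP c :
  Bcob G c -> exists psi, [/\ forall x, G (psi x), psi 0 = 0 & c = cob psi].
Proof.
move=> [cZ [psi Gpsi cpsi]]; exists psi; split=> //; last first.
  by apply/funext => -[x y]; exact: cpsi.
by have := Zcoc00 cZ; rewrite cpsi addr0 subrr add0r.
Qed.

Lemma cob_on_psi0 (S : set C) c psi : Zcoc G c -> S 0 -> cob_on S c psi -> psi 0 = 0.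
Proof.
by move=> cZ S0 cpsi; have := cpsi 0 0 S0 S0; rewrite Zcoc00 // /cob /= addr0 subrr add0r.
Qed.

Lemma Bwcob_add c d : Bwcob G c -> Bwcob G d -> Bwcob G (c + d).
Proof.
move=> [cZ cB] [dZ dB]; split; first exact: Zcoc_add.
move=> S SS; have [psi Gpsi cpsi] := cB S SS; have [chi Gchi dchi] := dB S SS.
exists (psi + chi) => [x|x y Sx Sy]; first exact: subgroupD.
by rewrite -[RHS]/(cob (psi + chi) (x, y)) cobD !fctE cpsi // dchi.
Qed.

Lemma Bwcob_sub (G' : set A) c : G `<=` G' -> Bwcob G c -> Bwcob G' c.
Proof.
move=> GG' [[Gc cZ] cB]; split; first by split=> // x y; exact: GG'.
by move=> S SS; have [psi Gpsi cpsi] := cB S SS; exists psi => // x; exact: GG'.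
Qed.

Lemma cob_on_values (S : set C) chi x y : additive_subgroup S ->
  (forall z, S z -> G (chi z)) -> S x -> S y -> G (cob chi (x, y)).
Proof.
move=> SS Gchi Sx Sy; apply: subgroupD => //; last exact: Gchi.
by apply: subgroupB => //; apply: Gchi => //; exact: subgroupD.
Qed.

Lemma cob_on_patch (S : set C) c chi : additive_subgroup S ->
  (forall z, S z -> G (chi z)) -> cob_on S c chi ->
  exists2 chi', (forall z, G (chi' z)) & cob_on S c chi'.
Proof.
move=> SS Gchi cchi; exists (fun z => if `[< S z >] then chi z else 0).
  by move=> z; case: asboolP => [/Gchi | _] //; exact: subgroup0.
move=> x y Sx Sy; have Sxy : S (x + y) by exact: subgroupD.
by rewrite cchi // /cob /= !asboolT.
Qed.

End Cocycles.

Section Construction.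
Variables (p : nat) (C A : countZmodType).
Hypotheses (p_gt0 : (0 < p)%N) (hC : is_pgroup p C).
Implicit Types (c d : C * C -> A) (psi chi : C -> A) (x y z : C).

Local Notation Ap := (@pprimary p A).

Let Ap_subgroup : additive_subgroup Ap := pprimary_subgroup p A.

(* Some power of p killing x, not necessarily the order of x. *)
Definition pord x : nat := p ^ xget 0%N [set n | x *+ p ^ n = 0].

Lemma mulrn_pord x : x *+ pord x = 0.
Proof. exact: (xgetPex 0%N (hC x)). Qed.

Lemma pord_gt0 x : (0 < pord x)%N.
Proof. by rewrite expn_gt0 p_gt0. Qed.

Lemma pprimary_mulrn_pord (a : A) x : Ap (a *+ pord x) -> Ap a.
Proof. exact: pprimary_mulrnX. Qed.

Lemma mulrn_modpord x i : x *+ (i %% pord x) = x *+ i.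
Proof.
by rewrite {2}(divn_eq i (pord x)) mulrnDr mulnC mulrnA mulrn_pord mul0rn add0r.
Qed.

Lemma oppr_mulrn_pord x i : - (x *+ i) = x *+ ((pord x).-1 * i).
Proof.
have xN : x *+ (pord x).-1 = - x.
  by apply/eqP; rewrite -addr_eq0 -mulrSr prednK ?pord_gt0 ?mulrn_pord.
by rewrite mulrnA xN mulNrn.
Qed.

Lemma finite_subgroup2 x y : exists S : set C, [/\ finite_subgroup S, S x & S y].
Proof.
exists [set z | exists i j, z = x *+ i + y *+ j]; split; last first.
- by exists 0%N, 1%N; rewrite mulr0n add0r.
- by exists 1%N, 0%N; rewrite mulr0n addr0.
split; [|split].
- apply: (@sub_finite_set _ _
    ((fun ij : 'I_(pord x) * 'I_(pord y) => x *+ ij.1 + y *+ ij.2) @` setT)).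
    move=> _ [i [j ->]].
    exists (Ordinal (ltn_pmod i (pord_gt0 x)), Ordinal (ltn_pmod j (pord_gt0 y))) => //=.
    by rewrite !mulrn_modpord.
  exact/finite_image/finite_finset.
- by exists 0%N, 0%N; rewrite !mulr0n addr0.
- move=> _ _ [i [j ->]] [i' [j' ->]].
  exists (i + (pord x).-1 * i')%N, (j + (pord y).-1 * j')%N.
  by rewrite opprD addrACA !oppr_mulrn_pord -!mulrnDr.
Qed.

Definition orbit_sum c x : A := \sum_(k < pord x) c (x, x *+ k).

Lemma orbit_sumD c d x : orbit_sum (c + d) x = orbit_sum c x + orbit_sum d x.
Proof. by rewrite /orbit_sum -big_split. Qed.

Lemma orbit_sumB c d x : orbit_sum (c - d) x = orbit_sum c x - orbit_sum d x.
Proof. by rewrite /orbit_sum -sumrB. Qed.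

Lemma orbit_sum_cob psi x : psi 0 = 0 -> orbit_sum (cob psi) x = psi x *+ pord x.
Proof. by move=> psi0; rewrite /orbit_sum sum_cob_orbit mulrn_pord psi0 subrr subr0. Qed.

Lemma orbit_sum_cob_on (G : set A) (S : set C) c psi x :
  Zcoc G c -> finite_subgroup S -> cob_on S c psi -> S x -> orbit_sum c x = psi x *+ pord x.
Proof.
move=> cZ /finite_subgroup_additive SS cpsi Sx.
have psi0 := cob_on_psi0 cZ (subgroup0 SS) cpsi.
rewrite -orbit_sum_cob //; apply: eq_bigr => k _; apply: cpsi => //; exact: subgroupMn.
Qed.

(* Setting quo_pord 0 v = 0 is what makes pcoc c normalized. *)
Definition quo_pord x (v : A) : A :=
  if x == 0 then 0 else xget 0 [set a | Ap (v - a *+ pord x)].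

Lemma quo_pordP x (v a : A) :
  (x = 0 -> v = 0) -> Ap (v - a *+ pord x) -> Ap (v - quo_pord x v *+ pord x).
Proof.
move=> v0 va; rewrite /quo_pord; case: eqP => [/v0 -> | _].
  by rewrite mul0rn subrr; exact: subgroup0.
by apply: (xgetPex 0 (P := [set a | Ap (v - a *+ pord x)])); exists a.
Qed.

Definition corr c x : A := quo_pord x (orbit_sum c x).

Definition pcoc c : C * C -> A := c - cob (corr c).

Lemma corr0 c : corr c 0 = 0.
Proof. by rewrite /corr /quo_pord eqxx. Qed.

Lemma corr_spec c z : Bwcob setT c -> Ap (orbit_sum c z - corr c z *+ pord z).
Proof.
move=> [cZ cB]; have [S [SS Sz _]] := finite_subgroup2 z z.
have [psi _ cpsi] := cB S SS.
have psi0 := cob_on_psi0 cZ (subgroup0 (finite_subgroup_additive SS)) cpsi.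
have sz := orbit_sum_cob_on cZ SS cpsi Sz.
apply: (quo_pordP (a := psi z)); first by move=> z0; rewrite sz z0 psi0 mul0rn.
by rewrite sz subrr; exact: subgroup0.
Qed.

Lemma corr_cob_on c (S : set C) psi z : Bwcob setT c -> finite_subgroup S ->
  cob_on S c psi -> S z -> Ap (psi z - corr c z).
Proof.
move=> cBw SS cpsi Sz; apply: (@pprimary_mulrn_pord _ z).
by rewrite mulrnBl -(orbit_sum_cob_on cBw.1 SS cpsi Sz); exact: corr_spec.
Qed.

Lemma pcoc_cob_on (S : set C) c psi : cob_on S c psi -> cob_on S (pcoc c) (psi - corr c).
Proof. by move=> cpsi x y Sx Sy; rewrite cobB /pcoc !fctE cpsi. Qed.

Lemma pcoc_Bwcob c : Bwcob setT c -> Bwcob Ap (pcoc c).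
Proof.
move=> cBw; have Ap_cob_on (S : set C) psi : finite_subgroup S -> cob_on S c psi ->
    forall z, S z -> Ap ((psi - corr c) z).
  by move=> SS cpsi z Sz; exact: corr_cob_on cBw SS cpsi Sz.
have [cZ cB] := cBw; split.
  apply: (Zcoc_restrict (G := setT)).
    by apply: Zcoc_sub => //; apply: Zcoc_cob => //; exact: corr0.
  move=> [x y]; have [S [SS Sx Sy]] := finite_subgroup2 x y.
  have [psi _ cpsi] := cB S SS; rewrite (pcoc_cob_on cpsi) //.
  exact: cob_on_values (finite_subgroup_additive SS) (Ap_cob_on S psi SS cpsi) Sx Sy.
move=> S SS; have [psi _ cpsi] := cB S SS.
apply: cob_on_patch (finite_subgroup_additive SS) (Ap_cob_on S psi SS cpsi) _ => //.
exact: pcoc_cob_on.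
Qed.

Lemma pcocB c d : pcoc c - pcoc d = (c - d) - cob (corr c - corr d).
Proof. by rewrite /pcoc subBrACA cobB. Qed.

Lemma pcocD c d : pcoc (c + d) - (pcoc c + pcoc d) = cob (corr c + corr d - corr (c + d)).
Proof. by rewrite /pcoc addBrACA subBrACA subrr sub0r opprB cobB cobD. Qed.

Lemma Bcob_pprimary_cob chi :
  chi 0 = 0 -> (forall z, Ap (chi z *+ pord z)) -> Bcob Ap (cob chi).
Proof.
by move=> chi0 Apchi; apply: Bcob_cob => // z; exact: pprimary_mulrn_pord (Apchi z).
Qed.

Lemma pcoc_Bcob c d : Bwcob setT c -> Bwcob setT d ->
  Bcob setT (c - d) -> Bcob Ap (pcoc c - pcoc d).
Proof.
move=> cBw dBw /Bcob_cobP[psi [_ psi0 cd]].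
rewrite pcocB cd -cobB; apply: Bcob_pprimary_cob => [|z].
  by rewrite !fctE psi0 !corr0 subrr subr0.
rewrite !fctE !mulrnBl -orbit_sum_cob // -cd orbit_sumB subBrACA.
by apply: (subgroupB Ap_subgroup); exact: corr_spec.
Qed.

Lemma pcoc_Bcob_reflect c d : Bcob Ap (pcoc c - pcoc d) -> Bcob setT (c - d).
Proof.
move=> /Bcob_cobP[chi [_ chi0 cd]].
have -> : c - d = cob (chi + (corr c - corr d)) by rewrite cobD -cd pcocB subrK.
by apply: Bcob_cob => //; rewrite !fctE chi0 !corr0 subrr addr0.
Qed.

Lemma pcoc_additive c d : Bwcob setT c -> Bwcob setT d ->
  Bcob Ap (pcoc (c + d) - (pcoc c + pcoc d)).
Proof.
move=> cBw dBw; have cdBw := Bwcob_add (additive_subgroupT A) cBw dBw.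
rewrite pcocD; apply: Bcob_pprimary_cob => [|z]; first by rewrite !fctE !corr0 addr0 subrr.
set N := pord z; rewrite !fctE mulrnBl mulrnDl.
have -> : corr c z *+ N + corr d z *+ N - corr (c + d) z *+ N =
    (orbit_sum (c + d) z - corr (c + d) z *+ N)
    - ((orbit_sum c z - corr c z *+ N) + (orbit_sum d z - corr d z *+ N)).
  rewrite (addBrACA (orbit_sum c z)) (subBrACA (orbit_sum (c + d) z)).
  by rewrite orbit_sumD subrr sub0r opprB.
by apply: (subgroupB Ap_subgroup); [|apply: (subgroupD Ap_subgroup)]; exact: corr_spec.
Qed.

Lemma pcoc_onto e : Bwcob Ap e -> Bcob Ap (e - pcoc e).
Proof.
move=> eBw; rewrite /pcoc subKr; apply: Bcob_pprimary_cob => [|z]; first exact: corr0.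
rewrite -[_ *+ _](subKr (orbit_sum e z)); apply: (subgroupB Ap_subgroup); last first.
  by apply: corr_spec; exact: Bwcob_sub eBw.
by apply: subgroup_sum => // k; exact: eBw.1.1.
Qed.

End Construction.

Section PointwiseDiscrete.
Variables (X Y : choiceType).
Local Notation P := {ptws X -> discrete_topology Y}.

Lemma near_ptws_coord (c0 : P) (x : X) : \forall c \near c0, c x = c0 x.
Proof.
exact: (@proj_continuous _ (fun=> discrete_topology Y) x c0 _ (discrete_set1 (c0 x))).
Qed.

Lemma continuous_ptws (T : topologicalType) (f : T -> P) :
  (forall t x, \forall s \near t, f s x = f t x) -> continuous f.
Proof.
move=> fP t; apply/(@pointwise_cvgP (discrete_topology X)) => x W /= /nbhs_singleton Wfx.
by apply: filterS (fP t x) => s /= ->.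
Qed.

End PointwiseDiscrete.

Lemma continuous_borel_on (T U : topologicalType) (D : set T) (f : T -> U) :
  continuous f -> borel_on D f.
Proof.
move=> fC B BB; exists (f @^-1` B) => //.
suff : @Borel U `<=` image_set_system setT f (@Borel T).
  by move/(_ B BB); rewrite /image_set_system /= setTI.
apply: smallest_sub; first exact/sigma_algebra_image/smallest_sigma_algebra.
move=> O oO; rewrite /image_set_system /= setTI; apply: sub_sigma_algebra.
by apply: open_comp => // x _; exact: fC.
Qed.

Section Continuity.
Variables (p : nat) (C A : countZmodType).

Lemma near_orbit_sum (c0 : cochain_space C A) x :
  \forall c \near c0, orbit_sum p c x = orbit_sum p c0 x.
Proof.
have /filter_forall :
    forall k : 'I_(pord p x), \forall c \near c0, c (x, x *+ k) = c0 (x, x *+ k).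
  by move=> k; exact: near_ptws_coord.
by apply: filterS => c ck; apply: eq_bigr => k _; exact: ck.
Qed.

Lemma pcoc_continuous : continuous (@pcoc p C A : cochain_space C A -> cochain_space C A).
Proof.
apply: continuous_ptws => c0 [x y]; near=> c.
rewrite /pcoc /corr !fctE /cob /=.
rewrite (near (near_ptws_coord c0 (x, y)) c) // (near (near_orbit_sum c0 x) c) //.
by rewrite (near (near_orbit_sum c0 y) c) // (near (near_orbit_sum c0 (x + y)) c).
Unshelve. all: by end_near.
Qed.

End Continuity.

Theorem lemma4p5 (p : nat) (C A : countZmodType) :
  prime p -> is_pgroup p C ->
  @PExt_borel_isomorphic C A setT (@pprimary p A).
Proof.
move=> /prime_gt0 p_gt0 hC; exists (@pcoc p C A).
split; first exact/continuous_borel_on/pcoc_continuous.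
split; first by move=> c; exact: pcoc_Bwcob.
split; first by move=> c d; exact: pcoc_Bcob.
split; first by move=> c d; exact: pcoc_additive.
split; first by move=> c d _ _; exact: pcoc_Bcob_reflect.
by move=> e eBw; exists e; [exact: Bwcob_sub eBw | exact: pcoc_onto].
Qed.
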